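(* Let $G=(X,Y,E)$ be a bipartite graph with non-negative weights $\omega_e$ on its edges $e\in E$. Suppose that for all $x\in X$ and all $y\in Y$, $$\sum_{e\in\delta_G(x)}\omega_e=\frac{1}{|X|}\qquad\text{and}\qquad\sum_{e\in\delta_G(y)}\omega_e=\frac{1}{|Y|}.$$ Then for any subset $Y'\subseteq Y$ of size $\left\lceil\frac{|Y|-|X|}{|X|}\right\rceil$, there exists a matching in $G$ covering every vertex of $X$ and covering no vertex of $Y'$.
   Context: $\delta_G(z)$ denotes the set of edges of $G$ incident to the vertex $z$.
   Formalization: The bipartite graph is also assumed to satisfy |X| ≤ |Y|, a condition that the two conditions on the weight sums at the vertices do not imply. The statement above fails without it. *)

From HB Require Import structures.
From mathcomp Require Import all_boot all_order all_algebra.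
Set Implicit Arguments. Unset Strict Implicit. Unset Printing Implicit Defensive.
Import Order.TTheory GRing.Theory Num.Theory.
Local Open Scope ring_scope.

(* A bipartite graph G = (X, Y, E) is given by two finite vertex classes
   (types) X, Y and an edge set E : {set X * Y}; the edge (x, y) joins x and y. *)

Definition deltaX (X Y : finType) (E : {set X * Y}) (x : X) : {set X * Y} :=
  [set e in E | e.1 == x].
Definition deltaY (X Y : finType) (E : {set X * Y}) (y : Y) : {set X * Y} :=
  [set e in E | e.2 == y].

Definition is_matching (X Y : finType) (E M : {set X * Y}) : Prop :=
  M \subset E /\
  forall e1 e2, e1 \in M -> e2 \in M -> e1 != e2 -> (e1.1 != e2.1) && (e1.2 != e2.2).

Definition coversX (X Y : finType) (M : {set X * Y}) (x : X) : Prop :=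
  exists2 e, e \in M & e.1 = x.
Definition coversY (X Y : finType) (M : {set X * Y}) (y : Y) : Prop :=
  exists2 e, e \in M & e.2 = y.

From HB Require Import structures.
From mathcomp Require Import all_boot all_order all_algebra.
From mathcomp Require Import zify lra.
Import Order.TTheory GRing.Theory Num.Theory.
Set Implicit Arguments. Unset Strict Implicit. Unset Printing Implicit Defensive.

(* Double counting the weights: the edges at S \subseteq X carry |S|/|X|, and they all
   lie at the neighbourhood N(S), which carries |N(S)|/|Y|.  Hence
   |N(S)| |X| >= |S| |Y| > |S| |Y'| |X|, which forces |N(S) \ Y'| >= |S|, and Hall's
   theorem matches X into Y \ Y'. *)

Section Hall.

Variables (X Y : finType) (adj : X -> Y -> bool).
Implicit Types (A S T : {set X}) (B C : {set Y}).

Definition nbh S B : {set Y} := [set y in B | [exists x in S, adj x y]].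

Definition hall_condition A B := forall S, S \subset A -> #|S| <= #|nbh S B|.

Definition sdr A B (f : X -> Y) :=
  {in A &, injective f} /\ {in A, forall x, adj x (f x) && (f x \in B)}.

Lemma nbhP S B x y : x \in S -> adj x y -> y \in B -> y \in nbh S B.
Proof. by move=> xS axy yB; rewrite inE yB; apply/existsP; exists x; rewrite xS. Qed.

Lemma nbh_subset S B : nbh S B \subset B.
Proof. by apply/subsetP => y; rewrite inE => /andP[]. Qed.

Lemma card_nbh_setD S B C : #|nbh S B| <= #|nbh S (B :\: C)| + #|C|.
Proof.
apply: leq_trans (leq_card_setU _ _); apply: subset_leq_card.
by apply/subsetP => y; rewrite !inE; case: (y \in C); rewrite ?orbT ?orbF.
Qed.

Lemma sdr_nbh S B f : sdr S B f -> sdr S (nbh S B) f.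
Proof.
case=> finj hf; split=> // x xS.
by have /andP[axf fxB] := hf x xS; rewrite axf (nbhP xS).
Qed.

Lemma sdr_glue A S B C f g :
  C \subset B -> sdr S C f -> sdr (A :\: S) (B :\: C) g ->
  sdr A B (fun x => if x \in S then f x else g x).
Proof.
move=> sCB [finj hf] [ginj hg].
have fC x : x \in S -> adj x (f x) && (f x \in C) by apply: hf.
have gBC x : x \in A -> x \notin S -> [&& adj x (g x), g x \in B & g x \notin C].
  by move=> xA xS; have := hg x; rewrite !inE xS xA andbA => /(_ isT) /andP[/andP[-> ->] ->].
split=> [x x' xA x'A | x xA] /=.
  case xS: (x \in S); case x'S: (x' \in S).
  - exact: finj.
  - by move=> fgx; have /and3P[_ _] := gBC x' x'A (negbT x'S); rewrite -fgx (andP (fC x xS)).2.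
  - by move=> gfx; have /and3P[_ _] := gBC x xA (negbT xS); rewrite gfx (andP (fC x' x'S)).2.
  by apply: ginj; rewrite inE ?xS ?x'S.
case: ifPn => [xS | xS]; last by case/and3P: (gBC x xA xS) => -> ->.
by have /andP[-> /(subsetP sCB) ->] := fC x xS.
Qed.

Lemma hall_contract A B S0 :
  S0 \subset A -> #|nbh S0 B| <= #|S0| ->
  hall_condition A B -> hall_condition (A :\: S0) (B :\: nbh S0 B).
Proof.
move=> sS0A tight hallAB T; rewrite subsetD => /andP[sTA disTS0].
have cardTS0 : #|T :|: S0| = #|T| + #|S0|.
  by have := cardsUI T S0; rewrite disjoint_setI0 // cards0 addn0.
have nbhTS0 : nbh (T :|: S0) (B :\: nbh S0 B) \subset nbh T (B :\: nbh S0 B).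
  apply/subsetP => y; rewrite [y \in _]inE [y \in _ :\: _]inE.
  case/andP=> /andP[yS0 yB] /existsP[x /andP[]]; rewrite inE => /orP[xT | xS0] axy.
    by apply: nbhP xT axy _; rewrite inE yS0.
  by rewrite (nbhP xS0 axy yB) in yS0.
have := hallAB (T :|: S0); rewrite subUset sTA sS0A => /(_ isT).
have := card_nbh_setD (T :|: S0) B (nbh S0 B); have := subset_leq_card nbhTS0.
lia.
Qed.

Lemma hall_remove A B x0 y :
  x0 \in A -> (forall S, S \subset A -> S != set0 -> S != A -> #|S| < #|nbh S B|) ->
  hall_condition (A :\ x0) (B :\ y).
Proof.
move=> x0A surplus T sT; have [-> | nT] := eqVneq T set0; first by rewrite cards0.
have sTA : T \subset A := subset_trans sT (subsetDl A _).
have TA : T != A.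
  by apply: contraTneq sT => ->; apply/subsetPn; exists x0; rewrite // !inE eqxx.
have := surplus T sTA nT TA; have := card_nbh_setD T B [set y]; rewrite cards1.
lia.
Qed.

Theorem hall_marriage (y0 : Y) A B : hall_condition A B -> exists f, sdr A B f.
Proof.
have [n] := ubnP #|A|; elim: n A B => // n IH A B ltAn hallAB.
(* Either a nonempty proper S0 is tight, and A splits into S0 (matched into N(S0)) and
   A \ S0 (matched into B \ N(S0)); or every such S0 has surplus, and any edge x0 y at
   all can be used and removed. *)
have [S0 | surplus] := pickP [pred S : {set X} |
  [&& S \subset A, S != set0, S != A & #|nbh S B| <= #|S|]].
  case/and4P=> sS0A nS0 S0A tight.
  have ltS0 : #|S0| < n.
    by have := @proper_card _ S0 A; rewrite properEneq S0A sS0A => /(_ isT); lia.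
  have ltAS0 : #|A :\: S0| < n.
    by rewrite cardsDS //; move: nS0 ltAn; rewrite -card_gt0; lia.
  have [f hf] := IH S0 B ltS0 (fun S sS => hallAB S (subset_trans sS sS0A)).
  have [g hg] := IH _ _ ltAS0 (hall_contract sS0A tight hallAB).
  by eexists; apply: sdr_glue (nbh_subset S0 B) (sdr_nbh hf) hg.
have [A0 | [x0 x0A]] := set_0Vmem A.
  by exists (fun=> y0); split=> x; rewrite A0 inE.
have : 0 < #|nbh [set x0] B|.
  by have := hallAB [set x0]; rewrite sub1set x0A cards1; apply.
rewrite card_gt0 => /set0Pn[y]; rewrite inE => /andP[yB /existsP[_ /andP[/set1P-> ax0y]]].
have ltAx0 : #|A :\ x0| < n by move: ltAn; rewrite (cardsD1 x0 A) x0A; lia.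
have surplus' S : S \subset A -> S != set0 -> S != A -> #|S| < #|nbh S B|.
  by move=> sSA nS SA; have := surplus S; rewrite /= sSA nS SA /= ltnNge => ->.
have [g hg] := IH _ _ ltAx0 (hall_remove y x0A surplus').
have hy : sdr [set x0] [set y] (fun=> y).
  by split=> [z z' /set1P-> /set1P-> | z /set1P->]; rewrite ?ax0y ?set11.
by eexists; apply: sdr_glue hy hg; rewrite sub1set.
Qed.

End Hall.

Definition edge_rel (X Y : finType) (E : {set X * Y}) x y := (x, y) \in E.

Definition fun_graph (X Y : finType) (f : X -> Y) : {set X * Y} := [set e | e.2 == f e.1].

Lemma sdr_fun_graph (X Y : finType) (E : {set X * Y}) B f :
  sdr (edge_rel E) setT B f ->
  [/\ is_matching E (fun_graph f), forall x, coversX (fun_graph f) x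
    & forall y, y \notin B -> ~ coversY (fun_graph f) y].
Proof.
case=> finj hf; split.
- split.
    by apply/subsetP => -[x y]; rewrite inE /= => /eqP->; case/andP: (hf x (in_setT x)).
  move=> [x1 y1] [x2 y2]; rewrite !inE /= => /eqP-> /eqP-> ne12.
  have nx : x1 != x2 by apply: contraNneq ne12 => ->.
  by rewrite nx; apply: contraNneq nx => /(finj _ _ (in_setT _) (in_setT _))->.
- by move=> x; exists (x, f x); rewrite ?inE.
- move=> y yB [[x y']]; rewrite inE /= => /eqP-> /= fxy.
  by case/andP: (hf x (in_setT x)); rewrite fxy (negbTE yB).
Qed.

Local Open Scope ring_scope.

Section DoubleCounting.

Variables (R : numDomainType) (X Y : finType) (E : {set X * Y}) (w : X * Y -> R).
Hypothesis w_ge0 : forall e, e \in E -> 0 <= w e.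

Lemma sum_fibers (T : finType) (p : X * Y -> T) (S : {set T}) :
  \sum_(t in S) \sum_(e in E | p e == t) w e = \sum_(e in E | p e \in S) w e.
Proof.
rewrite [RHS](partition_big p (mem S)) => [|e /andP[]//].
apply: eq_bigr => t tS; apply: eq_bigl => e.
by case: eqP => [->|]; rewrite ?tS ?andbT ?andbF.
Qed.

Lemma sum_deltaX_le_sum_deltaY (S : {set X}) :
  \sum_(x in S) \sum_(e in deltaX E x) w e <=
  \sum_(y in nbh (edge_rel E) S setT) \sum_(e in deltaY E y) w e.
Proof.
have dX x : \sum_(e in deltaX E x) w e = \sum_(e in E | e.1 == x) w e.
  by apply: eq_bigl => e; rewrite inE.
have dY y : \sum_(e in deltaY E y) w e = \sum_(e in E | e.2 == y) w e.
  by apply: eq_bigl => e; rewrite inE.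
rewrite (eq_bigr _ (fun x _ => dX x)) (eq_bigr _ (fun y _ => dY y)).
rewrite !sum_fibers [lhs in lhs <= _]big_mkcond [rhs in _ <= rhs]big_mkcond /=.
apply: ler_sum => -[x y] _ /=.
case eE: ((x, y) \in E) => //=; case: ifPn => [xS | _].
  by rewrite (nbhP xS eE) ?inE.
by case: ifP => // _; exact: w_ge0.
Qed.

End DoubleCounting.

Lemma card_nbh_ge_of_regular (R : numFieldType) (X Y : finType) (E : {set X * Y})
    (w : X * Y -> R) :
  (forall e, e \in E -> 0 <= w e) ->
  (forall x, \sum_(e in deltaX E x) w e = 1 / #|X|%:R) ->
  (forall y, \sum_(e in deltaY E y) w e = 1 / #|Y|%:R) ->
  (0 < #|X|)%N -> (0 < #|Y|)%N ->
  forall S : {set X}, (#|S| * #|Y| <= #|nbh (edge_rel E) S setT| * #|X|)%N.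
Proof.
move=> w_ge0 hX hY X0 Y0 S; have := sum_deltaX_le_sum_deltaY w_ge0 S.
under eq_bigr do rewrite hX.
under [rhs in _ <= rhs -> _]eq_bigr do rewrite hY.
rewrite sumr_const [rhs in _ <= rhs -> _]sumr_const !div1r.
rewrite -[lhs in lhs <= _ -> _]mulr_natl -[rhs in _ <= rhs -> _]mulr_natl.
rewrite ler_pdivrMr ?ltr0n // mulrAC ler_pdivlMr ?ltr0n //.
by rewrite -!natrM ler_nat.
Qed.

Lemma ceil_ratio_sub1_mul_lt (R : archiRealFieldType) (k a b : nat) :
  (0 < a)%N -> k%:Z = Num.ceil ((b%:R - a%:R) / a%:R : R) -> (k * a < b)%N.
Proof.
move=> a0 hk; rewrite -(ltr_nat R) natrM.
have := ceilB1_lt ((b%:R - a%:R) / a%:R : R).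
rewrite -hk intrB ltr_pdivlMr ?ltr0n //.
nra.
Qed.

Lemma deficiency_bound (s n k a b : nat) :
  (0 < s)%N -> (a <= b)%N -> (k * a < b)%N -> (s * b <= n * a)%N -> (s + k <= n)%N.
Proof. nia. Qed.

Theorem lemma2p9 (R : realFieldType) (X Y : finType) (E : {set X * Y})
    (w : X * Y -> R)
    (hw : forall e, e \in E -> 0 <= w e)
    (hX : forall x : X, \sum_(e in deltaX E x) w e = 1 / (#|X|%:R))
    (hY : forall y : Y, \sum_(e in deltaY E y) w e = 1 / (#|Y|%:R))
    (hXY : (#|X| <= #|Y|)%N)
    (Y' : {set Y})
    (hY' : #|Y'|%:Z =
           Num.ceil (((#|Y|%:R - #|X|%:R) / #|X|%:R) : rat)) :
  exists M : {set X * Y},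
    [/\ is_matching E M,
        forall x : X, coversX M x
      & forall y : Y, y \in Y' -> ~ coversY M y].
Proof.
have [X0 | [x0 _]] := set_0Vmem [set: X].
  exists set0; split.
  - by split=> [|e]; rewrite ?sub0set ?inE.
  - by move=> x; have := in_setT x; rewrite X0 inE.
  - by move=> y _ [e]; rewrite inE.
have X_gt0 : (0 < #|X|)%N by apply/card_gt0P; exists x0.
have [y0 _] : exists y0 : Y, y0 \in Y by apply/card_gt0P; apply: leq_trans hXY.
have hk := ceil_ratio_sub1_mul_lt X_gt0 hY'.
have count := card_nbh_ge_of_regular hw hX hY X_gt0 (leq_trans X_gt0 hXY).
have hall : hall_condition (edge_rel E) setT (~: Y').
  move=> S _; have [-> | nS] := eqVneq S set0; first by rewrite cards0.
  have S_gt0 : (0 < #|S|)%N by rewrite card_gt0.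
  have := deficiency_bound S_gt0 hXY hk (count S).
  by have := card_nbh_setD (edge_rel E) S setT Y'; rewrite setTD; lia.
have [f hf] := hall_marriage y0 hall.
have [matching covers avoids] := sdr_fun_graph hf.
by exists (fun_graph f); split=> // y yY'; apply: avoids; rewrite inE yY'.
Qed.
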